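(* Let $\rho_1$ be a path in a higraph and $k\ge1$. Given a $k$-tuple $(e^1_1,\dots,e^k_1)$ of distinct breaks of $\rho_1$, define recursively for $j=2,\dots,k$: $\rho_j=q(\rho_{j-1},e^{j-1}_{j-1})$ and $e^i_j=\pi(e^i_{j-1})$ for $j\le i\le k$, where $\pi$ is the bijection induced by the gluing $\rho_{j-1}\mapsto\rho_j$. Then the map $(e^1_1,e^2_1,\dots,e^k_1)\mapsto(e^1_1,e^2_2,\dots,e^k_k)$ is a bijection from the set of $k$-tuples of distinct breaks of $\rho_1$ to the set of $k$-step gluing sequences on $\rho_1$. Furthermore, if two $k$-tuples differ by a permutation, then the corresponding $k$-step gluing sequences terminate in the same path $\rho_{k+1}$.
   Context: A directed hypergraph $\mathcal H=(\mathcal V,\mathcal E)$ has edges $\varepsilon=(I,J)\in2^{\mathcal V}\times2^{\mathcal V}$, source $I$, target $J$. It is a higraph if for all edges $\varepsilon,\varepsilon'$: (Transitive) if $t(\varepsilon)\cap s(\varepsilon')\ne\emptyset$ then it equals $\{K\}$ for one vertex $K$, the unions $s(\varepsilon)\cup(s(\varepsilon')\setminus\{K\})$ and $(t(\varepsilon)\setminus\{K\})\cup t(\varepsilon')$ are disjoint unions and their pair is an edge; (Acyclic) if $t(\varepsilon)\cap s(\varepsilon')$ and $t(\varepsilon')\cap s(\varepsilon)$ are both non-empty then $\varepsilon=\varepsilon'=(\{K\},\{K\})$. A path is a non-empty finite directed tree $T=(V,E)$ (nodes; arrows, called breaks) with $\rho:V\to\mathcal E$ such that for each arrow $e$, $t(\rho(s(e)))\cap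 s(\rho(t(e)))$ is a single vertex $\rho(e)$, and distinct arrows with common source node or common target node have distinct $\rho(e)$; label-compatible tree isomorphisms identify paths. For a subpath $\rho'$, $s(\rho')=\bigcup_v(s(\rho'(v))\setminus\{\rho'(e):t(e)=v\})$, $t(\rho')=\bigcup_v(t(\rho'(v))\setminus\{\rho'(e):s(e)=v\})$. Gluing at a break $e$: $q(\rho,e)$ has tree obtained by contracting the arrow $e$ to a node $v^*$ (other arrows kept), labels unchanged away from $v^*$, $\rho(v^* )=(s(\rho'),t(\rho'))$ with $\rho'$ the subpath on the endpoints of $e$. This contraction induces a bijection $\pi$ from the arrows of the old tree other than $e$ to the arrows of the new tree. A $k$-step gluing sequence on $\rho_1$ is $(e_1,\dots,e_k)$ with $e_i$ a break of $\rho_i$ and $\rho_{i+1}=q(\rho_i,e_i)$, identified up to isomorphisms of the corresponding paths identifying corresponding breaks. *)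

From mathcomp Require Import ssreflect ssrfun ssrbool eqtype ssrnat seq.
From mathcomp Require Import boolp classical_sets.
From Stdlib Require Import Relations.

Set Implicit Arguments.
Unset Strict Implicit.
Unset Printing Implicit Defensive.

Local Open Scope classical_set_scope.

Definition edge (V : Type) := (set V * set V)%type.
Definition esrc V (eps : edge V) : set V := eps.1.
Definition etgt V (eps : edge V) : set V := eps.2.

Definition higraph_transitive V (H : set (edge V)) : Prop :=
  forall eps eps', H eps -> H eps' ->
    etgt eps `&` esrc eps' !=set0 ->
    exists K : V,
      etgt eps `&` esrc eps' = [set K] /\
      esrc eps `&` (esrc eps' `\ K) = set0 /\
      (etgt eps `\ K) `&` etgt eps' = set0 /\
      H (esrc eps `|` (esrc eps' `\ K), (etgt eps `\ K) `|` etgt eps').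

Definition higraph_acyclic V (H : set (edge V)) : Prop :=
  forall eps eps', H eps -> H eps' ->
    etgt eps `&` esrc eps' !=set0 -> etgt eps' `&` esrc eps !=set0 ->
    exists K : V, eps = ([set K], [set K]) /\ eps' = ([set K], [set K]).

Definition is_higraph V (H : set (edge V)) : Prop :=
  higraph_transitive H /\ higraph_acyclic H.

(* Nodes are 0..nn-1, arrows (breaks) are 0..na-1; arrow [a] goes from node
   [asrc a] to node [atgt a]; [nlab] is rho on nodes, [alab] is rho on arrows.
   Values outside the index ranges are irrelevant. *)
Record rpath (V : Type) := RPath {
  nn : nat;
  na : nat;
  nlab : nat -> edge V;
  asrc : nat -> nat;
  atgt : nat -> nat;
  alab : nat -> V }.

Definition uadj V (p : rpath V) (x y : nat) : Prop :=
  exists a, a < na p /\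
    ((asrc p a = x /\ atgt p a = y) \/ (asrc p a = y /\ atgt p a = x)).

Definition is_tree V (p : rpath V) : Prop :=
  [/\ 0 < nn p, (na p).+1 = nn p,
      (forall a, a < na p -> asrc p a < nn p /\ atgt p a < nn p) &
      (forall x y, x < nn p -> y < nn p -> clos_refl_trans nat (uadj p) x y)].

Definition is_path V (H : set (edge V)) (p : rpath V) : Prop :=
  [/\ is_tree p,
      (forall v, v < nn p -> H (nlab p v)),
      (forall a, a < na p ->
         etgt (nlab p (asrc p a)) `&` esrc (nlab p (atgt p a)) = [set alab p a]),
      (forall a b, a < na p -> b < na p -> a <> b ->
         asrc p a = asrc p b -> alab p a <> alab p b) &
      (forall a b, a < na p -> b < na p -> a <> b ->
         atgt p a = atgt p b -> alab p a <> alab p b)].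

Definition path_iso V (p p' : rpath V) (phi psi : nat -> nat) : Prop :=
  [/\ (forall v, v < nn p -> phi v < nn p'),
      (forall v w, v < nn p -> w < nn p -> phi v = phi w -> v = w) &
      (forall v', v' < nn p' -> exists2 v, v < nn p & phi v = v')] /\
  [/\ (forall a, a < na p -> psi a < na p'),
      (forall a b, a < na p -> b < na p -> psi a = psi b -> a = b) &
      (forall a', a' < na p' -> exists2 a, a < na p & psi a = a')] /\
  (forall v, v < nn p -> nlab p' (phi v) = nlab p v) /\
  (forall a, a < na p -> [/\ asrc p' (psi a) = phi (asrc p a),
                             atgt p' (psi a) = phi (atgt p a) &
                             alab p' (psi a) = alab p a]).

Definition isomorphic V (p p' : rpath V) : Prop :=
  exists phi psi, path_iso p p' phi psi.

Definition sub_arrow V (p : rpath V) (S : nat -> Prop) (a : nat) : Prop :=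
  a < na p /\ S (asrc p a) /\ S (atgt p a).

Definition subpath_src V (p : rpath V) (S : nat -> Prop) : set V :=
  [set x | exists v, [/\ S v, esrc (nlab p v) x &
      ~ (exists a, [/\ sub_arrow p S a, atgt p a = v & alab p a = x])]].

Definition subpath_tgt V (p : rpath V) (S : nat -> Prop) : set V :=
  [set x | exists v, [/\ S v, etgt (nlab p v) x &
      ~ (exists a, [/\ sub_arrow p S a, asrc p a = v & alab p a = x])]].

Definition ends V (p : rpath V) (e : nat) : nat -> Prop :=
  fun v => v = asrc p e \/ v = atgt p e.

Definition glue_lab V (p : rpath V) (e : nat) : edge V :=
  (subpath_src p (ends p e), subpath_tgt p (ends p e)).

(* gluing q(p, e): node atgt e is merged into node asrc e (the merged node
   v* gets number [node_shift y x]); arrow e is removed and the other arrows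
   are renumbered by [pi e]. *)
Definition node_shift (y v : nat) : nat := if v < y then v else v.-1.
Definition node_map (x y v : nat) : nat :=
  if v == y then node_shift y x else node_shift y v.
Definition node_unshift (y w : nat) : nat := if w < y then w else w.+1.

Definition pi (e j : nat) : nat := if j < e then j else j.-1.
Definition arr_unshift (e j : nat) : nat := if j < e then j else j.+1.

Definition glue V (p : rpath V) (e : nat) : rpath V :=
  let x := asrc p e in let y := atgt p e in
  RPath (nn p).-1 (na p).-1
    (fun w => if w == node_shift y x then glue_lab p e
              else nlab p (node_unshift y w))
    (fun j => node_map x y (asrc p (arr_unshift e j)))
    (fun j => node_map x y (atgt p (arr_unshift e j)))
    (fun j => alab p (arr_unshift e j)).

Definition glue_seq V (p : rpath V) (es : seq nat) : rpath V := foldl (@glue V) p es.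

Fixpoint valid_gs V (p : rpath V) (es : seq nat) : Prop :=
  match es with
  | [::] => True
  | e :: es' => e < na p /\ valid_gs (glue p e) es'
  end.

(* identification of gluing sequences up to isomorphisms of the corresponding
   paths identifying corresponding breaks *)
Definition gs_equiv V (p : rpath V) (es : seq nat) (p' : rpath V) (es' : seq nat)
  : Prop :=
  size es = size es' /\
  forall j, j < size es ->
    exists phi psi,
      path_iso (glue_seq p (take j es)) (glue_seq p' (take j es')) phi psi /\
      psi (nth 0 es j) = nth 0 es' j.

Definition break_tuple V (p : rpath V) (k : nat) (ds : seq nat) : Prop :=
  [/\ size ds = k, uniq ds & all (fun d => d < na p) ds].

Fixpoint tup2gs_aux (n : nat) (ds : seq nat) : seq nat :=
  match n, ds with
  | n'.+1, d :: ds' => d :: tup2gs_aux n' (map (pi d) ds')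
  | _, _ => [::]
  end.
Definition tup2gs (ds : seq nat) : seq nat := tup2gs_aux (size ds) ds.

(* Renumbering the remaining breaks after each gluing turns a tuple of distinct
   breaks into a gluing sequence, injectively; it is a gluing sequence because
   gluing preserves paths (transitivity of the higraph makes the glued label an
   edge and keeps the labelling conditions).  Identified gluing sequences are
   equal since paths have no nontrivial automorphisms: one fixing a node is the
   identity by the distinct-labels condition, and otherwise all its orbits would
   have one size m > 1 dividing both the number of nodes and the number of
   arrows of a tree.  For surjectivity and permutation invariance, the result of
   gluing a set of breaks in any order is characterised as the contraction of
   the original path along that set: contractions along the same set are
   isomorphic, and reading each glued break back through the contraction turns
   any gluing sequence into a tuple of distinct breaks of the original path. *)

From mathcomp Require Import ssreflect ssrfun ssrbool eqtype ssrnat seq.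
From mathcomp Require Import boolp classical_sets.
From mathcomp Require Import div fintype.
From Stdlib Require Import Relations Lia.
From mathcomp Require Import zify.

Set Implicit Arguments.
Unset Strict Implicit.
Unset Printing Implicit Defensive.

Local Open Scope classical_set_scope.

(** * Trees *)

Definition uadj_in V (p : rpath V) (E : nat -> Prop) (x y : nat) : Prop :=
  exists a, [/\ a < na p, E a &
    ((asrc p a = x /\ atgt p a = y) \/ (asrc p a = y /\ atgt p a = x))].

Fixpoint reach_in V (p : rpath V) (E : nat -> Prop) (k u : nat) : Prop :=
  match k with
  | 0 => u = 0
  | k'.+1 => u = 0 \/ exists v, uadj_in p E u v /\ reach_in p E k' v
  end.

Lemma uadj_in_sym V (p : rpath V) E x y : uadj_in p E x y -> uadj_in p E y x.
Proof. by case=> a [? ? [[? ?]|[? ?]]]; exists a; split => //; [right|left]. Qed.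

Lemma crt_uadj_in_sym V (p : rpath V) E x y :
  clos_refl_trans nat (uadj_in p E) x y -> clos_refl_trans nat (uadj_in p E) y x.
Proof.
elim=> [u v /uadj_in_sym|u|u v w _ H1 _ H2];
  [exact: rt_step|exact: rt_refl|exact: rt_trans H2 H1].
Qed.

Lemma reach_in_of_crt V (p : rpath V) E u :
  clos_refl_trans nat (uadj_in p E) 0 u -> exists k, reach_in p E k u.
Proof.
move/clos_rt_rtn1_iff; elim=> [|y z Ryz _ [k Hk]]; first by exists 0.
by exists k.+1; right; exists y; split => //; apply: uadj_in_sym.
Qed.

Section ArrowInjection.
Variables (V : Type) (p : rpath V) (E : nat -> Prop).
Hypothesis arrow_ends : forall a, a < na p -> asrc p a < nn p /\ atgt p a < nn p.
Hypothesis connected_in :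
  forall x y, x < nn p -> y < nn p -> clos_refl_trans nat (uadj_in p E) x y.

Lemma reach_in_exists u : u < nn p -> exists k, `[< reach_in p E k u >].
Proof.
move=> Hu; have [k Hk] : exists k, reach_in p E k u.
  by apply: reach_in_of_crt; apply: connected_in => //; apply: leq_ltn_trans Hu.
by exists k; apply/asboolP.
Qed.

Definition dist0 u :=
  if pselect (u < nn p) is left Hu then ex_minn (reach_in_exists Hu) else 0.

Lemma dist0P u : u < nn p ->
  reach_in p E (dist0 u) u /\ forall k, reach_in p E k u -> dist0 u <= k.
Proof.
move=> Hu; rewrite /dist0; case: pselect => // Hu'.
by case: ex_minnP => m /asboolP Hm Hmin; split => // k /asboolP /Hmin.
Qed.

Lemma parent_arrow u : exists a, 0 < u < nn p ->
  exists v, [/\ a < na p, E a, v < nn p, dist0 v < dist0 u &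
    ((asrc p a = u /\ atgt p a = v) \/ (asrc p a = v /\ atgt p a = u))].
Proof.
case: (EM (0 < u < nn p)) => [/andP [u0 Hu]|nu]; last by exists 0.
have [] := dist0P Hu; case: (dist0 u) => [/= u_0|k /= [u_0|[v [[a [Ha Ea Hj]] Hv]]]] Hmin;
  try by move: u0; rewrite u_0.
have Hvn : v < nn p by have [] := arrow_ends Ha; case: Hj => [[_ <-]|[<- _]].
exists a => _; exists v; split => //.
by have [_ /(_ _ Hv)] := dist0P Hvn.
Qed.

(* Sending each non-root node to the first arrow of a shortest path to node [0]
   is injective: an arrow shared by [u <> w] would give
   [dist0 u < dist0 w < dist0 u]. *)
Lemma connected_arrow_injection :
  exists f : nat -> nat, (forall u, 0 < u < nn p -> f u < na p /\ E (f u)) /\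
     (forall u w, 0 < u < nn p -> 0 < w < nn p -> f u = f w -> u = w).
Proof.
have [f Hf] := choice parent_arrow.
exists f; split; first by move=> u /Hf [v []].
move=> u w Hu Hw Efw.
have [vu [_ _ _ du ou]] := Hf u Hu; have [vw [_ _ _ dw ow]] := Hf w Hw.
rewrite Efw in ou.
have cyc : vu = w /\ vw = u -> False.
  by case=> E1 E2; rewrite E1 in du; rewrite E2 in dw; move: (ltn_trans du dw); rewrite ltnn.
case: ou => [[s1 t1]|[s1 t1]]; case: ow => [[s2 t2]|[s2 t2]].
- by rewrite -s1 s2.
- by exfalso; apply: cyc; split; [rewrite -t1 t2|rewrite -s2 s1].
- by exfalso; apply: cyc; split; [rewrite -s1 s2|rewrite -t2 t1].
- by rewrite -t1 t2.
Qed.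

End ArrowInjection.

Lemma connected_in_of_arrows V (p : rpath V) E :
  (forall x y, x < nn p -> y < nn p -> clos_refl_trans nat (uadj p) x y) ->
  (forall a, a < na p -> ~ E a -> clos_refl_trans nat (uadj_in p E) (asrc p a) (atgt p a)) ->
  forall x y, x < nn p -> y < nn p -> clos_refl_trans nat (uadj_in p E) x y.
Proof.
move=> conn HE x y Hx Hy; elim: (conn x y Hx Hy) => [u v [a [Ha o]]|u|u v w _ H1 _ H2].
- case: (EM (E a)) => Ea; first by apply: rt_step; exists a; split.
  case: o => [[<- <-]|[<- <-]]; first exact: HE.
  exact/crt_uadj_in_sym/HE.
- exact: rt_refl.
- exact: rt_trans H1 H2.
Qed.

Lemma tree_arrow_ends V (p : rpath V) :
  is_tree p -> forall a, a < na p -> asrc p a < nn p /\ atgt p a < nn p.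
Proof. by case. Qed.

(* Without [a0] the tree would stay connected, so its [nn p - 1] non-root nodes
   would inject into the [na p - 1 = nn p - 2] remaining arrows. *)
Lemma tree_arrow_bridge V (p : rpath V) a0 : is_tree p -> a0 < na p ->
  ~ clos_refl_trans nat (uadj_in p (fun a => a <> a0)) (asrc p a0) (atgt p a0).
Proof.
move=> T Ha0 Hred; have [_ En _ conn] := T.
have [|f [f1 f2]] := connected_arrow_injection (tree_arrow_ends T)
  (connected_in_of_arrows conn (E := fun a => a <> a0) _).
  by move=> a _; case: (EM (a = a0)) => [->|].
have Hu : uniq (map f (iota 1 (na p))).
  rewrite map_inj_in_uniq ?iota_uniq // => u w; rewrite !mem_iota add1n En.
  exact: f2.
have Hs : {subset map f (iota 1 (na p)) <= rem a0 (iota 0 (na p))}.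
  move=> b /mapP [u]; rewrite mem_iota add1n En => /f1 [Hf1 Hf2] ->.
  rewrite (mem_rem_uniq _ (iota_uniq _ _)) inE mem_iota /=.
  by apply/andP; split; [apply/eqP|].
have := uniq_leq_size Hu Hs.
rewrite size_map size_iota size_rem ?size_iota ?mem_iota //.
by case: (na p) Ha0 => // n _; rewrite ltnn.
Qed.

Lemma tree_arrow_no_loop V (p : rpath V) a :
  is_tree p -> a < na p -> asrc p a <> atgt p a.
Proof. by move=> T Ha E; apply: (tree_arrow_bridge T Ha); rewrite E; apply: rt_refl. Qed.

Lemma tree_arrow_no_parallel V (p : rpath V) a b :
  is_tree p -> a < na p -> b < na p -> a <> b ->
  (asrc p a = asrc p b /\ atgt p a = atgt p b) \/
  (asrc p a = atgt p b /\ atgt p a = asrc p b) -> False.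
Proof.
by move=> T Ha Hb Hab o; apply: (tree_arrow_bridge T Hb); apply: rt_step; exists a.
Qed.

(** * Orbits of a bounded injection *)

Lemma uniq_flatten_map (T U : eqType) (F : T -> seq U) (rs : seq T) :
  uniq rs -> (forall r, r \in rs -> uniq (F r)) ->
  (forall r r' x, r \in rs -> r' \in rs -> r != r' -> x \in F r -> x \notin F r') ->
  uniq (flatten (map F rs)).
Proof.
elim: rs => //= r rs IH /andP [nr urs] HF Hd.
rewrite cat_uniq HF ?mem_head //= IH //; last first.
- by move=> a b x Ha Hb; apply: Hd; rewrite inE ?Ha ?Hb orbT.
- by move=> a Ha; apply: HF; rewrite inE Ha orbT.
rewrite andbT; apply/hasPn => x /flattenP [s /mapP [r' Hr' ->] Hx].
apply: (Hd r' r) => //; rewrite ?inE ?Hr' ?eqxx ?orbT //.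
by apply/eqP => E; move: nr; rewrite -E Hr'.
Qed.

Lemma size_flatten_const (T : eqType) (ss : seq (seq T)) m :
  (forall s, s \in ss -> size s = m) -> size (flatten ss) = m * size ss.
Proof.
elim: ss => [|s ss IH] H /=; first by rewrite muln0.
rewrite size_cat IH ?H ?mem_head //=; first by rewrite mulnS.
by move=> s' Hs'; apply: H; rewrite inE Hs' orbT.
Qed.

Section BoundedInjection.
Variables (N : nat) (t : nat -> nat).
Hypotheses (tN : forall x, x < N -> t x < N)
  (tinj : forall x y, x < N -> y < N -> t x = t y -> x = y).

Lemma iter_lt j x : x < N -> iter j t x < N.
Proof. by elim: j => //= j IH Hx; apply/tN/IH. Qed.

Lemma iter_inj_in j x y : x < N -> y < N -> iter j t x = iter j t y -> x = y.
Proof.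
elim: j x y => //= j IH x y Hx Hy E; apply: IH => //; apply: tinj => //; exact: iter_lt.
Qed.

Lemma iter_cycle x : x < N -> exists j, 0 < j /\ iter j t x = x.
Proof.
move=> Hx.
case: (EM (exists i j, [/\ i < j, j <= N & iter i t x = iter j t x])).
  move=> [i [j [lij jN E]]]; exists (j - i); split; first by rewrite subn_gt0.
  apply: (iter_inj_in (j := i)); [exact: iter_lt|done|].
  by rewrite -iterD subnKC // ltnW.
move=> nE; exfalso.
have U : uniq (map (fun j => iter j t x) (iota 0 N.+1)).
  rewrite map_inj_in_uniq ?iota_uniq // => i j; rewrite !mem_iota !add0n /= => Hi Hj E.
  by case: (ltngtP i j) => // l; exfalso; apply: nE; [exists i, j|exists j, i].
have S : {subset map (fun j => iter j t x) (iota 0 N.+1) <= iota 0 N}.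
  by move=> y /mapP [j _ ->]; rewrite mem_iota add0n iter_lt.
by have := uniq_leq_size U S; rewrite size_map !size_iota ltnn.
Qed.

Section FreeOrbits.
Variable m : nat.
Hypotheses (m0 : 0 < m) (tm : forall x, x < N -> iter m t x = x)
  (tfree : forall x j, x < N -> 0 < j < m -> iter j t x <> x).

Lemma iter_modn j x : x < N -> iter j t x = iter (j %% m) t x.
Proof.
move=> Hx; rewrite {1}(divn_eq j m) iterD.
have := iter_lt (j %% m) Hx; move: (iter _ t x) => y Hy.
elim: (j %/ m) => [|q IH]; first by rewrite mul0n.
by rewrite mulSn iterD IH tm.
Qed.

Definition orbit_rep r := all (fun j => r <= iter j t r) (iota 0 m).
Definition orbit_reps := filter orbit_rep (iota 0 N).
Definition orbit_seq r := map (fun j => iter j t r) (iota 0 m).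

Lemma orbit_repP r j : r < N -> orbit_rep r -> r <= iter j t r.
Proof.
by move=> Hr /allP H; rewrite iter_modn //; apply: H; rewrite mem_iota add0n ltn_mod.
Qed.

Lemma orbit_seq_uniq r : r < N -> uniq (orbit_seq r).
Proof.
move=> Hr; rewrite map_inj_in_uniq ?iota_uniq // => i j.
rewrite !mem_iota /= !add0n => Hi Hj E.
wlog lt : i j Hi Hj E / i <= j.
  by move=> W; case: (leqP i j) => [|/ltnW] l; [exact: W|apply/esym; exact: W].
case: (ltngtP i j) lt => // l _.
exfalso; apply: (tfree (x := r) (j := j - i)) => //.
  by rewrite subn_gt0 l /=; apply: leq_ltn_trans (leq_subr _ _) Hj.
apply: (iter_inj_in (j := i)); [exact: iter_lt|done|].
by rewrite -iterD subnKC // ltnW.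
Qed.

Lemma orbit_seq_disjoint r r' x : r \in orbit_reps -> r' \in orbit_reps -> r != r' ->
  x \in orbit_seq r -> x \notin orbit_seq r'.
Proof.
rewrite !mem_filter !mem_iota /= !add0n => /andP [Rr Hr] /andP [Rr' Hr'] neq.
move=> /mapP [i]; rewrite mem_iota add0n /= => Hi ->.
apply/negP => /mapP [j]; rewrite mem_iota add0n /= => Hj E.
have E1 : r' = iter (m - j + i) t r by rewrite iterD E -iterD subnK ?tm // ltnW.
have E2 : r = iter (m - i + j) t r' by rewrite iterD -E -iterD subnK ?tm // ltnW.
have l1 := orbit_repP (m - j + i) Hr Rr; rewrite -E1 in l1.
have l2 := orbit_repP (m - i + j) Hr' Rr'; rewrite -E2 in l2.
by move: neq; rewrite eqn_leq l1 l2.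
Qed.

Lemma orbit_seq_cover x : x < N -> exists2 r, r \in orbit_reps & x \in orbit_seq r.
Proof.
move=> Hx.
have ex : exists v, [exists j : 'I_m, iter j t x == v].
  by exists x; apply/existsP; exists (Ordinal m0); rewrite eqxx.
case: (ex_minnP ex) => v /existsP [[j0 Hj0] /eqP /= Ev] Hmin.
exists v.
  rewrite mem_filter mem_iota /= add0n -Ev iter_lt // andbT.
  apply/allP => j; rewrite mem_iota add0n /= => Hj.
  rewrite -iterD (iter_modn (j + j0)) // Ev; apply: Hmin; apply/existsP.
  by exists (Ordinal (ltn_pmod (j + j0) m0)).
have Hv : v < N by rewrite -Ev iter_lt.
apply/mapP; exists ((m - j0) %% m); first by rewrite mem_iota add0n ltn_pmod.
by rewrite -(iter_modn _ Hv) -Ev -iterD subnK ?tm // ltnW.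
Qed.

Lemma free_orbit_dvdn : m %| N.
Proof.
have P : perm_eq (flatten (map orbit_seq orbit_reps)) (iota 0 N).
  apply: uniq_perm; rewrite ?iota_uniq //.
    apply: uniq_flatten_map; first by rewrite filter_uniq ?iota_uniq.
      by move=> r; rewrite mem_filter mem_iota add0n => /andP [_]; apply: orbit_seq_uniq.
    exact: orbit_seq_disjoint.
  move=> x; rewrite mem_iota add0n /=; apply/idP/idP.
    move=> /flattenP [s /mapP [r Hr ->]] /mapP [j _ ->].
    by apply: iter_lt; move: Hr; rewrite mem_filter mem_iota add0n => /andP [].
  move=> /orbit_seq_cover [r Hr Hx].
  by apply/flattenP; exists (orbit_seq r) => //; apply: map_f.
have := perm_size P; rewrite size_iota (size_flatten_const (m := m)).
  by move=> <-; apply: dvdn_mulr.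
by move=> s /mapP [r _ ->]; rewrite size_map size_iota.
Qed.

End FreeOrbits.
End BoundedInjection.

(** * Isomorphisms of paths *)

Lemma path_iso_id V (p : rpath V) : path_iso p p id id.
Proof.
split; first by split => // v Hv; exists v.
split; first by split => // a Ha; exists a.
by split.
Qed.

Lemma path_iso_comp V (p p' p'' : rpath V) phi psi phi' psi' :
  path_iso p p' phi psi -> path_iso p' p'' phi' psi' ->
  path_iso p p'' (phi' \o phi) (psi' \o psi).
Proof.
move=> [[n1 n2 n3] [[a1 a2 a3] [l1 l2]]] [[n1' n2' n3'] [[a1' a2' a3'] [l1' l2']]].
split; [split|split; [split|split]].
- by move=> v Hv /=; apply/n1'/n1.
- by move=> v w Hv Hw /= E; apply: n2 => //; apply: n2' => //; apply: n1.
- by move=> v /n3' [w /n3 [u Hu <-] <-]; exists u.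
- by move=> a Ha /=; apply/a1'/a1.
- by move=> a b Ha Hb /= E; apply: a2 => //; apply: a2' => //; apply: a1.
- by move=> a /a3' [w /a3 [u Hu <-] <-]; exists u.
- by move=> v Hv /=; rewrite l1' ?l1 //; apply: n1.
- move=> a Ha /=; have [s1 s2 s3] := l2 a Ha.
  by have [-> -> ->] := l2' (psi a) (a1 a Ha); rewrite s1 s2 s3.
Qed.

Lemma path_iso_iter V (p : rpath V) phi psi j :
  path_iso p p phi psi -> path_iso p p (iter j phi) (iter j psi).
Proof.
by move=> I; elim: j => [|j IH]; [exact: path_iso_id|exact: path_iso_comp IH I].
Qed.

(* Arrows at a common node carry distinct labels, so an automorphism fixing a
   node fixes the arrows at it; connectedness propagates this. *)
Lemma path_auto_fixpoint V (H : set (edge V)) (q : rpath V) phi psi v0 :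
  is_path H q -> path_iso q q phi psi -> v0 < nn q -> phi v0 = v0 ->
  (forall v, v < nn q -> phi v = v) /\ (forall a, a < na q -> psi a = a).
Proof.
move=> [T _ _ ds dt] [_ [[a1 _ _] [_ l2]]] Hv0 F0.
have fix_src a : a < na q -> phi (asrc q a) = asrc q a -> psi a = a.
  move=> Ha Fs; have [s1 _ s3] := l2 a Ha; case: (EM (psi a = a)) => // ne.
  by exfalso; apply: (ds (psi a) a (a1 a Ha) Ha ne); rewrite ?s1 ?s3.
have fix_tgt a : a < na q -> phi (atgt q a) = atgt q a -> psi a = a.
  move=> Ha Ft; have [_ s2 s3] := l2 a Ha; case: (EM (psi a = a)) => // ne.
  by exfalso; apply: (dt (psi a) a (a1 a Ha) Ha ne); rewrite ?s2 ?s3.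
have fix_adj x y : uadj q x y -> phi x = x -> phi y = y.
  move=> [a [Ha [[<- <-]|[<- <-]]]] Fx.
    by have [_ s2 _] := l2 a Ha; rewrite -s2 fix_src.
  by have [s1 _ _] := l2 a Ha; rewrite -s1 fix_tgt.
have fix_node v : v < nn q -> phi v = v.
  move=> Hv; case: T => _ _ _ conn.
  elim: (conn v0 v Hv0 Hv) F0 => [x y|x|x y z _ IH1 _ IH2] //; first exact: fix_adj.
  by move/IH1/IH2.
split => // a Ha; apply: fix_src => //; apply: fix_node.
by have [] := tree_arrow_ends T Ha.
Qed.

(* For the least [m > 0] with [phi^m] fixing node [0], [phi^m] is the identity
   and no [phi^j] with [0 < j < m] fixes a node or an arrow; so all orbits have
   size [m], and [m] divides both [nn q] and [na q = nn q - 1]. *)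
Lemma path_auto_arrow_id V (H : set (edge V)) (q : rpath V) phi psi :
  is_path H q -> path_iso q q phi psi -> forall a, a < na q -> psi a = a.
Proof.
move=> P I; have [T _ _ _ _] := P; have [n0 En _ _] := T.
have [[n1 n2 _] [[a1 a2 _] _]] := I.
have ex : exists j, (0 < j) && (iter j phi 0 == 0).
  by have [j [j0 Ej]] := iter_cycle n1 n2 n0; exists j; rewrite j0 Ej eqxx.
case: (ex_minnP ex) => m /andP [m0 /eqP Em] Hmin.
have [Fm Gm] := path_auto_fixpoint P (path_iso_iter m I) n0 Em.
have free j v : v < nn q -> 0 < j < m -> iter j phi v <> v.
  move=> Hv /andP [j0 jm] Ej.
  have [Fj _] := path_auto_fixpoint P (path_iso_iter j I) Hv Ej.
  by have := Hmin j; rewrite j0 Fj // eqxx leqNgt jm => /(_ isT).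
have free_arrow j a : a < na q -> 0 < j < m -> iter j psi a <> a.
  move=> Ha Hj Ej; have [_ [_ [_ lj]]] := path_iso_iter j I.
  have [s1 _ _] := lj a Ha; rewrite Ej in s1.
  by apply: (free j (asrc q a)) => //; case: (tree_arrow_ends T Ha).
have d1 : m %| nn q by apply: (free_orbit_dvdn n1 n2 m0 Fm) => x j; apply: free.
have d2 : m %| na q by apply: (free_orbit_dvdn a1 a2 m0 Gm) => x j; apply: free_arrow.
have : m %| 1 by have := dvdn_sub d1 d2; rewrite -En subSnn.
rewrite dvdn1 => /eqP m1; rewrite m1 /= in Em.
by have [] := path_auto_fixpoint P I n0 Em.
Qed.

Lemma node_shift_lt n y v : v < n -> v <> y -> y < n -> node_shift y v < n.-1.
Proof. by rewrite /node_shift => Hv nvy Hy; case: (ltnP v y) => l; rewrite -?subn1; lia. Qed.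

Lemma node_unshift_lt n y w : w < n.-1 -> node_unshift y w < n.
Proof. by rewrite /node_unshift => Hw; case: (ltnP w y) => l; rewrite -?subn1 in Hw *; lia. Qed.

Lemma node_unshift_neq y w : node_unshift y w <> y.
Proof. by rewrite /node_unshift; case: (ltnP w y) => l; lia. Qed.

Lemma node_unshiftK y w : node_shift y (node_unshift y w) = w.
Proof.
rewrite /node_shift /node_unshift; case: (ltnP w y) => l; first by rewrite l.
by case: ltnP => l'; rewrite -?subn1; lia.
Qed.

Lemma node_shiftK y v : v <> y -> node_unshift y (node_shift y v) = v.
Proof.
rewrite /node_shift /node_unshift => nvy; case: (ltnP v y) => l; first by rewrite l.
by case: ltnP => l'; rewrite -?subn1 in l' *; lia.
Qed.

Lemma node_shift_inj y u v : u <> y -> v <> y -> node_shift y u = node_shift y v -> u = v.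
Proof. by move=> hu hv E; rewrite -(node_shiftK hu) -(node_shiftK hv) E. Qed.

Lemma node_map_eq x y u v : node_map x y u = node_map x y v -> x <> y ->
  u = v \/ ((u = x \/ u = y) /\ (v = x \/ v = y)).
Proof.
rewrite /node_map => E nxy.
case: (eqVneq u y) E => [->|/eqP nuy]; case: (eqVneq v y) => [->|/eqP nvy] //= E.
- by left.
- by right; split; [right|left; apply/esym; apply: node_shift_inj E].
- by right; split; [left; apply: node_shift_inj E|right].
- by left; apply: node_shift_inj E.
Qed.

Lemma node_map_unshift x y w : node_map x y (node_unshift y w) = w.
Proof. by rewrite /node_map; case: eqP => [/node_unshift_neq //|_]; rewrite node_unshiftK. Qed.

Lemma node_map_lt n x y v : v < n -> x < n -> y < n -> x <> y -> node_map x y v < n.-1.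
Proof. by rewrite /node_map => Hv Hx Hy nxy; case: eqP => [_|nvy]; apply: node_shift_lt. Qed.

Lemma pi_lt n e a : a < n -> a <> e -> e < n -> pi e a < n.-1.
Proof. by rewrite /pi => Ha nae He; case: (ltnP a e) => l; rewrite -?subn1; lia. Qed.

Lemma arr_unshift_lt n e j : j < n.-1 -> e < n -> arr_unshift e j < n.
Proof. by rewrite /arr_unshift => Hj He; case: (ltnP j e) => l; rewrite -?subn1 in Hj *; lia. Qed.

Lemma arr_unshift_neq e j : arr_unshift e j <> e.
Proof. by rewrite /arr_unshift; case: (ltnP j e) => l; lia. Qed.

Lemma arr_unshiftK e j : pi e (arr_unshift e j) = j.
Proof. exact: node_unshiftK. Qed.

Lemma piK e a : a <> e -> arr_unshift e (pi e a) = a.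
Proof. exact: node_shiftK. Qed.

Lemma arr_unshift_inj e i j : arr_unshift e i = arr_unshift e j -> i = j.
Proof. by move=> E; rewrite -(arr_unshiftK e i) E arr_unshiftK. Qed.

Lemma pi_inj_in d a b : a <> d -> b <> d -> pi d a = pi d b -> a = b.
Proof. by move=> ha hb E; rewrite -(piK ha) -(piK hb) E. Qed.

(** * Gluing preserves paths *)

Lemma setI1_mem V (A B : set V) L : A `&` B = [set L] -> A L /\ B L.
Proof. by move=> E; have : (A `&` B) L by rewrite E. Qed.

Lemma setI1_eq V (A B : set V) K L : A `&` B = [set K] -> A L -> B L -> A `&` B = [set L].
Proof. by move=> E HA HB; have : (A `&` B) L by []; rewrite E => /= ->. Qed.

Lemma setI0_mem V (A B : set V) z : A `&` B = set0 -> A z -> B z -> False.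
Proof. by move=> E HA HB; have : (A `&` B) z by []; rewrite E. Qed.

Lemma sub_arrow_ends V (p : rpath V) e a : is_tree p -> e < na p ->
  sub_arrow p (ends p e) a -> a = e.
Proof.
move=> T He [Ha [s1 s2]]; case: (EM (a = e)) => // nae; exfalso.
case: s1 => E1; case: s2 => E2.
- by apply: (tree_arrow_no_loop T Ha); rewrite E1 E2.
- by apply: (tree_arrow_no_parallel T Ha He nae); left.
- by apply: (tree_arrow_no_parallel T Ha He nae); right.
- by apply: (tree_arrow_no_loop T Ha); rewrite E1 E2.
Qed.

Lemma glue_lab_eq V (p : rpath V) e : is_tree p -> e < na p ->
  glue_lab p e =
  (esrc (nlab p (asrc p e)) `|` (esrc (nlab p (atgt p e)) `\ alab p e),
   (etgt (nlab p (asrc p e)) `\ alab p e) `|` etgt (nlab p (atgt p e))).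
Proof.
move=> T He; have nxy := tree_arrow_no_loop T He.
have only_e a : sub_arrow p (ends p e) a -> a = e by apply: sub_arrow_ends.
have in_e : sub_arrow p (ends p e) e by split => //; split; [left|right].
rewrite /glue_lab; congr pair; apply/seteqP; split => z /=.
- move=> [v [[->|->] Hz Hn]]; [by left|right; split => // /= Ez].
  by apply: Hn; exists e.
- move=> [Hz|[Hz nK]].
    exists (asrc p e); split => //; first by left.
    by move=> [a [/only_e -> E _]]; apply: nxy.
  exists (atgt p e); split => //; first by right.
  by move=> [a [/only_e -> _ E]]; apply: nK.
- move=> [v [[->|->] Hz Hn]]; [left; split => // /= Ez|by right].
  by apply: Hn; exists e.
- move=> [[Hz nK]|Hz].
    exists (asrc p e); split => //; first by left.
    by move=> [a [/only_e -> _ E]]; apply: nK.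
  exists (atgt p e); split => //; first by right.
  by move=> [a [/only_e -> E _]]; apply: nxy.
Qed.

Section GluePath.
Variables (V : Type) (H : set (edge V)) (p : rpath V) (e : nat).
Hypotheses (HH : is_higraph H) (P : is_path H p) (He : e < na p).

Let x := asrc p e.
Let y := atgt p e.
Let K := alab p e.
Let G := glue_lab p e.
Let g := glue p e.
Let Tp : is_tree p := let: And5 T _ _ _ _ := P in T.
Let nxy : x <> y := tree_arrow_no_loop Tp He.
Let Hxy : x < nn p /\ y < nn p := tree_arrow_ends Tp He.

Lemma glue_nlab_node_map v : v < nn p ->
  nlab g (node_map x y v) = if (v == x) || (v == y) then G else nlab p v.
Proof.
move=> Hv; rewrite /g /glue /= -/x -/y /node_map.
case: (eqVneq v y) => [->|nvy]; rewrite ?eqxx ?orbT //=.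
case: (eqVneq v x) => [->|/eqP nvx]; rewrite ?eqxx //=.
case: eqP => [/node_shift_inj E|_]; last by rewrite node_shiftK //; apply/eqP.
by case: nvx; apply: E => //; apply/eqP.
Qed.

Lemma glue_transitive :
  [/\ etgt (nlab p x) `&` esrc (nlab p y) = [set K],
      esrc (nlab p x) `&` (esrc (nlab p y) `\ K) = set0,
      (etgt (nlab p x) `\ K) `&` etgt (nlab p y) = set0 &
      H G].
Proof.
have [_ Hl Hi _ _] := P; have [Hx Hy] := Hxy; have [ti _] := HH.
have I : etgt (nlab p x) `&` esrc (nlab p y) = [set K] by exact: Hi.
have [K0 [E0 [d1 [d2 HG]]]] := ti _ _ (Hl x Hx) (Hl y Hy) (ex_intro _ K (setI1_mem I)).
have K0K : K0 = K.
  have : (etgt (nlab p x) `&` esrc (nlab p y)) K0 by rewrite E0.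
  by rewrite I.
rewrite K0K in d1 d2 HG; split => //.
by rewrite /G glue_lab_eq.
Qed.

Lemma node_map_ends : node_map x y x = node_shift y x /\ node_map x y y = node_shift y x.
Proof. by rewrite /node_map eqxx; case: eqP. Qed.

Lemma is_tree_glue : is_tree g.
Proof.
have [n0 En Hr conn] := Tp; have [Hx Hy] := Hxy.
have na0 : 0 < na p by apply: leq_ltn_trans He.
split => /=.
- have : x != y by apply/eqP.
  by rewrite -?subn1; lia.
- by rewrite -?subn1; lia.
- move=> j Hj; have Ha := arr_unshift_lt Hj He; have [r1 r2] := Hr _ Ha.
  by split; apply: node_map_lt.
- move=> w w' Hw Hw'.
  rewrite -(node_map_unshift x y w) -(node_map_unshift x y w').
  elim: (conn _ _ (node_unshift_lt y Hw) (node_unshift_lt y Hw'))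
    => [u v [a [Ha o]]|u|u v z _ IH1 _ IH2].
  + case: (EM (a = e)) => [Ea|nae].
      have [E1 E2] := node_map_ends.
      by case: o => [[<- <-]|[<- <-]]; rewrite Ea -/x -/y E1 E2; apply: rt_refl.
    apply: rt_step; exists (pi e a); split; first exact: pi_lt.
    by rewrite /= piK //; case: o => [[-> ->]|[-> ->]]; [left|right].
  + exact: rt_refl.
  + exact: rt_trans IH1 IH2.
Qed.

Lemma glue_in_higraph w : w < nn g -> H (nlab g w).
Proof.
have [_ Hl _ _ _] := P; have [_ _ _ HG] := glue_transitive.
by move=> /= Hw; case: eqP => _ //; apply/Hl/node_unshift_lt.
Qed.

Lemma glue_arrow_not_both_ends a : a < na p -> a <> e ->
  ((asrc p a == x) || (asrc p a == y)) -> ((atgt p a == x) || (atgt p a == y)) -> False.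
Proof.
move=> Ha nae /orP s1 /orP s2; apply/nae/(sub_arrow_ends Tp He).
by split => //; split; [case: s1|case: s2] => /eqP ->; [left|right|left|right].
Qed.

(* Transitivity of [H], applied to the glued edge and the far end of the arrow,
   keeps the intersection at a relabelled arrow a singleton. *)
Lemma glue_arrow_inter j : j < na g ->
  etgt (nlab g (asrc g j)) `&` esrc (nlab g (atgt g j)) = [set alab g j].
Proof.
have [T Hl Hi ds dt] := P; have [I d1 d2 HG] := glue_transitive; have [ti _] := HH.
move=> Hj; have Ha := arr_unshift_lt Hj He; have nae := @arr_unshift_neq e j.
move: Ha nae; set a := arr_unshift e j => Ha nae.
have [ul vl] := tree_arrow_ends T Ha.
change (etgt (nlab g (node_map x y (asrc p a))) `&` esrc (nlab g (node_map x y (atgt p a)))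
   = [set alab p a]).
rewrite !glue_nlab_node_map //.
have Ia := Hi a Ha; have [Lt Ls] := setI1_mem Ia.
case Eu: ((asrc p a == x) || (asrc p a == y)); case Ev: ((atgt p a == x) || (atgt p a == y)).
- by exfalso; apply: (glue_arrow_not_both_ends Ha nae); rewrite ?Eu ?Ev.
- have LG : etgt G (alab p a).
    rewrite /G glue_lab_eq //=; case/orP: Eu => /eqP Eu; rewrite Eu in Lt; last by right.
    by left; split => // EL; exact: (ds a e Ha He nae Eu EL).
  have [K1 [E1 _]] := ti _ _ HG (Hl _ vl) (ex_intro _ (alab p a) (conj LG Ls)).
  exact: setI1_eq E1 LG Ls.
- have LG : esrc G (alab p a).
    rewrite /G glue_lab_eq //=; case/orP: Ev => /eqP Ev; rewrite Ev in Ls; first by left.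
    by right; split => // EL; exact: (dt a e Ha He nae Ev EL).
  have [K1 [E1 _]] := ti _ _ (Hl _ ul) HG (ex_intro _ (alab p a) (conj Lt LG)).
  exact: setI1_eq E1 Lt LG.
- exact: Ia.
Qed.

(* Two arrows leaving the merged node from different former endpoints would
   share a label in [etgt x `\ K] and in [etgt y], which transitivity of [H]
   makes disjoint; dually for arrows entering it. *)
Lemma glue_src_labels_distinct j j' : j < na g -> j' < na g -> j <> j' ->
  asrc g j = asrc g j' -> alab g j <> alab g j'.
Proof.
have [T Hl Hi ds dt] := P; have [I d1 d2 HG] := glue_transitive.
move=> Hj Hj' njj' /= E EL.
have Ha := arr_unshift_lt Hj He; have Hb := arr_unshift_lt Hj' He.
have nae := @arr_unshift_neq e j; have nbe := @arr_unshift_neq e j'.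
have nab : arr_unshift e j <> arr_unshift e j' by move/arr_unshift_inj.
move: Ha Hb nae nbe nab E EL; set a := arr_unshift e j; set b := arr_unshift e j'.
move=> Ha Hb nae nbe nab E EL.
have [Lt _] := setI1_mem (Hi a Ha); have [Lt' _] := setI1_mem (Hi b Hb).
case: (node_map_eq E nxy) => [E'|[[Ea|Ea] [Eb|Eb]]].
- exact: ds a b Ha Hb nab E' EL.
- by apply: (ds a b Ha Hb nab _ EL); rewrite Ea Eb.
- rewrite Ea in Lt; rewrite Eb -EL in Lt'.
  apply: (setI0_mem d2 _ Lt'); split => // EK; exact: (ds a e Ha He nae Ea EK).
- rewrite Ea EL in Lt; rewrite Eb in Lt'.
  apply: (setI0_mem d2 _ Lt); split => // EK; exact: (ds b e Hb He nbe Eb EK).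
- by apply: (ds a b Ha Hb nab _ EL); rewrite Ea Eb.
Qed.

Lemma glue_tgt_labels_distinct j j' : j < na g -> j' < na g -> j <> j' ->
  atgt g j = atgt g j' -> alab g j <> alab g j'.
Proof.
have [T Hl Hi ds dt] := P; have [I d1 d2 HG] := glue_transitive.
move=> Hj Hj' njj' /= E EL.
have Ha := arr_unshift_lt Hj He; have Hb := arr_unshift_lt Hj' He.
have nae := @arr_unshift_neq e j; have nbe := @arr_unshift_neq e j'.
have nab : arr_unshift e j <> arr_unshift e j' by move/arr_unshift_inj.
move: Ha Hb nae nbe nab E EL; set a := arr_unshift e j; set b := arr_unshift e j'.
move=> Ha Hb nae nbe nab E EL.
have [_ Ls] := setI1_mem (Hi a Ha); have [_ Ls'] := setI1_mem (Hi b Hb).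
case: (node_map_eq E nxy) => [E'|[[Ea|Ea] [Eb|Eb]]].
- exact: dt a b Ha Hb nab E' EL.
- by apply: (dt a b Ha Hb nab _ EL); rewrite Ea Eb.
- rewrite Ea in Ls; rewrite Eb -EL in Ls'.
  apply: (setI0_mem d1 Ls); split => // EK.
  exact: (dt b e Hb He nbe Eb (etrans (esym EL) EK)).
- rewrite Ea EL in Ls; rewrite Eb in Ls'.
  apply: (setI0_mem d1 Ls'); split => // EK; exact: (dt a e Ha He nae Ea (etrans EL EK)).
- by apply: (dt a b Ha Hb nab _ EL); rewrite Ea Eb.
Qed.

Lemma is_path_glue : is_path H g.
Proof.
split; [exact: is_tree_glue|exact: glue_in_higraph|exact: glue_arrow_inter|
        exact: glue_src_labels_distinct|exact: glue_tgt_labels_distinct].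
Qed.

End GluePath.

Lemma tup2gs_cons d ds : tup2gs (d :: ds) = d :: tup2gs (map (pi d) ds).
Proof. by rewrite /tup2gs /= size_map. Qed.

Lemma tup2gs_ind (P : seq nat -> Prop) :
  P [::] -> (forall d ds, P (map (pi d) ds) -> P (d :: ds)) -> forall ds, P ds.
Proof.
move=> P0 PS ds; move: {2}(size ds) (erefl (size ds)) => n.
elim: n ds => [|n IH] [|d ds] //= [Es]; apply/PS/IH; by rewrite size_map.
Qed.

Lemma size_tup2gs ds : size (tup2gs ds) = size ds.
Proof. by elim/tup2gs_ind: ds => // d ds IH; rewrite tup2gs_cons /= IH size_map. Qed.

Lemma uniq_map_pi d ds : d \notin ds -> uniq ds -> uniq (map (pi d) ds).
Proof.
move=> nd u; rewrite map_inj_in_uniq // => a b Ha Hb; apply: pi_inj_in.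
  by move=> E; move: nd; rewrite -E Ha.
by move=> E; move: nd; rewrite -E Hb.
Qed.

Lemma all_map_pi d n ds : d \notin ds -> d < n -> all (fun a => a < n) ds ->
  all (fun a => a < n.-1) (map (pi d) ds).
Proof.
move=> nd Hd /allP H; apply/allP => b /mapP [a Ha ->]; apply: pi_lt => //; first exact: H.
by move=> E; move: nd; rewrite -E Ha.
Qed.

Lemma map_arr_unshift_pi d ds : d \notin ds -> map (arr_unshift d) (map (pi d) ds) = ds.
Proof.
move=> nd; rewrite -map_comp -[RHS]map_id; apply/eq_in_map => a Ha /=.
by apply: piK => E; move: nd; rewrite -E Ha.
Qed.

Lemma valid_gs_tup2gs V (q : rpath V) ds : uniq ds -> all (fun a => a < na q) ds ->
  valid_gs q (tup2gs ds).
Proof.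
elim/tup2gs_ind: ds q => // d ds IH q /andP [nd u] /andP [Hd Ha].
rewrite tup2gs_cons; split => //.
by apply: IH; [exact: uniq_map_pi|exact: all_map_pi].
Qed.

Lemma tup2gs_inj ds ds' : uniq ds -> uniq ds' -> tup2gs ds = tup2gs ds' -> ds = ds'.
Proof.
elim/tup2gs_ind: ds ds' => [|d ds IH] [|d' ds'] //; rewrite ?tup2gs_cons //.
move=> /andP [nd u] /andP [nd' u'] [Ed Er]; rewrite -Ed in nd' Er *.
rewrite -(map_arr_unshift_pi nd) -(map_arr_unshift_pi nd') (IH (map (pi d) ds')) //.
exact: uniq_map_pi.
exact: uniq_map_pi.
Qed.

Lemma gs_equiv_self_eq V (H : set (edge V)) es es' (q : rpath V) :
  is_higraph H -> is_path H q -> valid_gs q es -> gs_equiv q es q es' -> es = es'.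
Proof.
move=> HH; elim: es es' q => [|e es IH] [|e' es'] q P Hv [Es Eq] //.
case: Hv => He Hv.
have [phi [psi [I Ep]]] := Eq 0 isT.
rewrite /= (path_auto_arrow_id P I He) in Ep; rewrite -Ep.
congr cons; apply: (IH es' (glue q e)) => //; first exact: is_path_glue.
split=> [|j Hj]; first by case: Es.
have [phi' [psi' [I' E']]] := Eq j.+1 Hj.
by exists phi', psi'; rewrite /= -Ep in I'.
Qed.

(** * Contractions *)

Definition fiber V (p : rpath V) (f : nat -> nat) (w : nat) : nat -> Prop :=
  fun v => v < nn p /\ f v = w.

Definition src_contrib V (p : rpath V) (F : nat -> Prop) v z : Prop :=
  esrc (nlab p v) z /\ ~ (exists a, [/\ sub_arrow p F a, atgt p a = v & alab p a = z]).
Definition tgt_contrib V (p : rpath V) (F : nat -> Prop) v z : Prop :=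
  etgt (nlab p v) z /\ ~ (exists a, [/\ sub_arrow p F a, asrc p a = v & alab p a = z]).

(* [q] is the path obtained from [p] by gluing the arrows in [S] (in any order):
   [f] collapses the [S]-components of [p] onto the nodes of [q], [g] numbers
   the surviving arrows, and each node of [q] carries the source and target of
   the subpath on its fibre.  The last two fields, saying that distinct nodes of
   a fibre contribute disjointly to that source and target, are the invariant
   that makes one more gluing step go through. *)
Record contraction V (p q : rpath V) (S : nat -> Prop) (f g : nat -> nat) : Prop :=
  Contraction {
  ctr_contracted : forall a, S a -> a < na p;
  ctr_node_lt : forall v, v < nn p -> f v < nn q;
  ctr_node_surj : forall w, w < nn q -> exists2 v, v < nn p & f v = w;
  ctr_fiber_conn : forall u v, u < nn p -> v < nn p ->
     (f u = f v <-> clos_refl_trans nat (uadj_in p S) u v);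
  ctr_arrow : forall b, b < na q -> g b < na p /\ ~ S (g b);
  ctr_arrow_inj : forall a b, a < na q -> b < na q -> g a = g b -> a = b;
  ctr_arrow_surj : forall a, a < na p -> ~ S a -> exists2 b, b < na q & g b = a;
  ctr_arrow_ends : forall b, b < na q -> [/\ asrc q b = f (asrc p (g b)),
      atgt q b = f (atgt p (g b)) & alab q b = alab p (g b)];
  ctr_nlab : forall w, w < nn q ->
      nlab q w = (subpath_src p (fiber p f w), subpath_tgt p (fiber p f w));
  ctr_src_disj : forall u v z, u < nn p -> v < nn p -> u <> v -> f u = f v ->
      src_contrib p (fiber p f (f u)) u z -> src_contrib p (fiber p f (f u)) v z -> False;
  ctr_tgt_disj : forall u v z, u < nn p -> v < nn p -> u <> v -> f u = f v ->
      tgt_contrib p (fiber p f (f u)) u z -> tgt_contrib p (fiber p f (f u)) v z -> False }.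

Lemma crt_mono (R R' : relation nat) x y : (forall u v, R u v -> R' u v) ->
  clos_refl_trans nat R x y -> clos_refl_trans nat R' x y.
Proof.
move=> HR; elim=> [u v /HR|u|u v w _ H1 _ H2];
  [exact: rt_step|exact: rt_refl|exact: rt_trans H1 H2].
Qed.

Lemma crt_uadj_in_ext V (p : rpath V) S S' x y : (forall a, S a <-> S' a) ->
  clos_refl_trans nat (uadj_in p S) x y <-> clos_refl_trans nat (uadj_in p S') x y.
Proof.
by move=> SE; split; apply: crt_mono => u v [a [Ha /SE Sa o]]; exists a.
Qed.

Lemma crt_uadj_in_empty V (p : rpath V) x y :
  clos_refl_trans nat (uadj_in p (fun _ => False)) x y -> x = y.
Proof. by elim=> [u v [a [_ []]]|u|u v w _ -> _ ->]. Qed.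

Lemma fiber_ext V (p : rpath V) f1 f2 v1 v2 :
  (forall u, u < nn p -> (f1 u = v1 <-> f2 u = v2)) -> fiber p f1 v1 = fiber p f2 v2.
Proof.
move=> E; apply: funext => u; apply: propext.
by rewrite /fiber; split => -[Hu Eu]; split => //; apply/E.
Qed.

Lemma subpath_single V (p : rpath V) (F : nat -> Prop) v0 : is_tree p ->
  (forall v, F v <-> v = v0) ->
  subpath_src p F = esrc (nlab p v0) /\ subpath_tgt p F = etgt (nlab p v0).
Proof.
move=> T HF.
have no_arrow a : ~ sub_arrow p F a.
  by move=> [Ha [/HF E1 /HF E2]]; apply: (tree_arrow_no_loop T Ha); rewrite E1 E2.
split; apply/seteqP; split => z /=.
- by move=> [v [/HF -> ? _]].
- by move=> Hz; exists v0; split => //; [exact/HF|move=> [a [/no_arrow]]].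
- by move=> [v [/HF -> ? _]].
- by move=> Hz; exists v0; split => //; [exact/HF|move=> [a [/no_arrow]]].
Qed.

Lemma contraction_S_ext V (p q : rpath V) S S' f g :
  (forall a, S a <-> S' a) -> contraction p q S f g -> contraction p q S' f g.
Proof.
move=> SE C; split; try by case: C.
- by move=> a /SE; apply: (ctr_contracted C).
- by move=> u v Hu Hv; rewrite (ctr_fiber_conn C Hu Hv); apply: crt_uadj_in_ext.
- by move=> b Hb; have [G1 G2] := ctr_arrow C Hb; split => // /SE.
- by move=> a Ha nS; apply: (ctr_arrow_surj C Ha) => /SE.
Qed.

Lemma contraction_of_iso V (H : set (edge V)) (p q : rpath V) phi psi :
  is_path H p -> path_iso p q phi psi ->
  exists g, contraction p q (fun _ => False) phi g /\ (forall a, a < na p -> g (psi a) = a).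
Proof.
move=> [T _ _ _ _] [[n1 n2 n3] [[a1 a2 a3] [l1 l2]]].
have ex b : exists a, b < na q -> a < na p /\ psi a = b.
  case: (EM (b < na q)) => [/a3 [a Ha E]|nb]; last by exists 0.
  by exists a.
have [g Hg] := choice ex.
have gpsi a : a < na p -> g (psi a) = a.
  by move=> Ha; have [G1 G2] := Hg _ (a1 a Ha); apply: a2.
exists g; split => //; split => //.
- move=> u v Hu Hv; split => [E|/crt_uadj_in_empty -> //].
  by rewrite (n2 u v Hu Hv E); apply: rt_refl.
- by move=> b /Hg [G1 _]; split.
- move=> a b Ha Hb E; have [_ Ea] := Hg a Ha; have [_ Eb] := Hg b Hb.
  by rewrite -Ea -Eb E.
- by move=> a Ha _; exists (psi a); [exact: a1|exact: gpsi].
- by move=> b /Hg [G1 G2]; have := l2 _ G1; rewrite G2.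
- move=> w /n3 [v Hv <-].
  have HF u : fiber p phi (phi v) u <-> u = v.
    by split => [[Hu E]|->]; [exact: n2 Hu Hv E|split].
  have [-> ->] := subpath_single T HF.
  by rewrite l1 //; case: (nlab p v).
- by move=> u v z Hu Hv nuv E; exfalso; apply/nuv/n2.
- by move=> u v z Hu Hv nuv E; exfalso; apply/nuv/n2.
Qed.

Lemma contraction_refl V (H : set (edge V)) (p : rpath V) : is_path H p ->
  exists g, contraction p p (fun _ => False) id g /\ (forall a, a < na p -> g a = a).
Proof. by move=> P; have [g [C Hg]] := contraction_of_iso P (path_iso_id p); exists g. Qed.

Section ContractionIso.
Variables (V : Type) (p q1 q2 : rpath V) (S1 S2 : nat -> Prop) (f1 g1 f2 g2 : nat -> nat).
Hypotheses (T : is_tree p) (C1 : contraction p q1 S1 f1 g1) (C2 : contraction p q2 S2 f2 g2)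
  (SE : forall a, S1 a <-> S2 a).

Lemma contraction_same_fibers u v : u < nn p -> v < nn p -> (f1 u = f1 v <-> f2 u = f2 v).
Proof.
move=> Hu Hv; rewrite (ctr_fiber_conn C1 Hu Hv) (ctr_fiber_conn C2 Hu Hv).
exact: crt_uadj_in_ext.
Qed.

Lemma contraction_iso :
  exists phi psi, path_iso q1 q2 phi psi /\ (forall b, b < na q1 -> g2 (psi b) = g1 b).
Proof.
have ffE := contraction_same_fibers.
have exr w : exists v, w < nn q1 -> v < nn p /\ f1 v = w.
  case: (EM (w < nn q1)) => [/(ctr_node_surj C1) [v Hv E]|nw]; last by exists 0.
  by exists v.
have [r Hr] := choice exr.
have f2r v : v < nn p -> f2 (r (f1 v)) = f2 v.
  move=> Hv; have [R1 R2] := Hr _ (ctr_node_lt C1 Hv).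
  by apply/(ffE _ _ R1 Hv); rewrite R2.
have exh b : exists c, b < na q1 -> c < na q2 /\ g2 c = g1 b.
  case: (EM (b < na q1)) => [Hb|nb]; last by exists 0.
  have [G1 G2] := ctr_arrow C1 Hb.
  have [c Hc E] := ctr_arrow_surj C2 G1 (fun S => G2 (proj2 (SE _) S)); by exists c.
have [h Hh] := choice exh.
exists (fun w => f2 (r w)), h; split => //.
split; [split|split; [split|split]].
- by move=> w /Hr [R1 _]; apply: (ctr_node_lt C2).
- move=> w w' Hw Hw' E; have [R1 R2] := Hr w Hw; have [R1' R2'] := Hr w' Hw'.
  by rewrite -R2 -R2'; apply/(ffE _ _ R1 R1').
- move=> w2 /(ctr_node_surj C2) [v Hv <-].
  by exists (f1 v); [exact: (ctr_node_lt C1)|exact: f2r].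
- by move=> b /Hh [].
- move=> b b' Hb Hb' E; have [_ E1] := Hh b Hb; have [_ E2] := Hh b' Hb'.
  by apply: (ctr_arrow_inj C1) => //; rewrite -E1 -E2 E.
- move=> c Hc; have [G1 G2] := ctr_arrow C2 Hc.
  have [b Hb Eb] := ctr_arrow_surj C1 G1 (fun S => G2 (proj1 (SE _) S)).
  exists b => //; have [H1 H2] := Hh b Hb; apply: (ctr_arrow_inj C2) => //; by rewrite H2.
- move=> w Hw; have [R1 R2] := Hr w Hw.
  rewrite (ctr_nlab C2 (ctr_node_lt C2 R1)) (ctr_nlab C1 Hw).
  rewrite (@fiber_ext V p f2 f1 (f2 (r w)) w) // => u Hu.
  by rewrite -{2}R2; apply: iff_sym; apply: ffE.
- move=> b Hb; have [H1 H2] := Hh b Hb; have [G1 _] := ctr_arrow C1 Hb.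
  have [-> -> ->] := ctr_arrow_ends C2 H1; have [-> -> ->] := ctr_arrow_ends C1 Hb.
  have [u1 u2] := tree_arrow_ends T G1.
  by rewrite H2 !f2r.
- by move=> b /Hh [].
Qed.

End ContractionIso.

Lemma src_contrib_anti V (p : rpath V) (F F' : nat -> Prop) v z :
  (forall u, F u -> F' u) -> src_contrib p F' v z -> src_contrib p F v z.
Proof.
move=> FF [Hz Hn]; split => // -[a [[Ha [s1 s2]] E1 E2]]; apply: Hn.
by exists a; split => //; split => //; split; apply: FF.
Qed.

Lemma tgt_contrib_anti V (p : rpath V) (F F' : nat -> Prop) v z :
  (forall u, F u -> F' u) -> tgt_contrib p F' v z -> tgt_contrib p F v z.
Proof.
move=> FF [Hz Hn]; split => // -[a [[Ha [s1 s2]] E1 E2]]; apply: Hn.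
by exists a; split => //; split => //; split; apply: FF.
Qed.

Section ContractionArrows.
Variables (V : Type) (p q : rpath V) (S : nat -> Prop) (f g : nat -> nat).
Hypotheses (Tp : is_tree p) (Tq : is_tree q) (C : contraction p q S f g).

Lemma contracted_arrow_same_fiber b : b < na p -> S b -> f (asrc p b) = f (atgt p b).
Proof.
move=> Hb Sb; have [r1 r2] := tree_arrow_ends Tp Hb.
by apply/(ctr_fiber_conn C r1 r2); apply: rt_step; exists b; split => //; left.
Qed.

Lemma same_fiber_contracted b : b < na p -> f (asrc p b) = f (atgt p b) -> S b.
Proof.
move=> Hb E; case: (EM (S b)) => // nS; exfalso.
have [b' Hb' Eb] := ctr_arrow_surj C Hb nS; have [s1 s2 _] := ctr_arrow_ends C Hb'.
by apply: (tree_arrow_no_loop Tq Hb'); rewrite s1 s2 Eb.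
Qed.

(* Arrows of [q] are the images of the arrows of [p] outside [S], and [q] has
   no parallel arrows. *)
Lemma arrow_between_fibers b e : b < na p -> e < na q ->
  f (asrc p b) = asrc q e -> f (atgt p b) = atgt q e -> b = g e.
Proof.
move=> Hb He E1 E2; have nxy := tree_arrow_no_loop Tq He.
case: (EM (S b)) => [Sb|nS].
  by exfalso; apply: nxy; rewrite -E1 -E2; apply: contracted_arrow_same_fiber.
have [b' Hb' Eb] := ctr_arrow_surj C Hb nS; have [s1 s2 _] := ctr_arrow_ends C Hb'.
case: (EM (b' = e)) => [<-|nb']; first by rewrite Eb.
by exfalso; apply: (tree_arrow_no_parallel Tq Hb' He nb'); left; rewrite s1 s2 Eb E1 E2.
Qed.

Lemma no_arrow_against_fibers b e : b < na p -> e < na q ->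
  f (asrc p b) = atgt q e -> f (atgt p b) = asrc q e -> False.
Proof.
move=> Hb He E1 E2; have nxy := tree_arrow_no_loop Tq He.
case: (EM (S b)) => [Sb|nS].
  by apply: nxy; rewrite -E1 -E2; apply/esym/contracted_arrow_same_fiber.
have [b' Hb' Eb] := ctr_arrow_surj C Hb nS; have [s1 s2 _] := ctr_arrow_ends C Hb'.
case: (EM (b' = e)) => [Eb'|nb'].
  by apply: nxy; rewrite -Eb' s1 Eb E1 Eb'.
by apply: (tree_arrow_no_parallel Tq Hb' He nb'); right; rewrite s1 s2 Eb E1 E2.
Qed.

End ContractionArrows.

(** * Gluing one more arrow of a contraction *)

Section GlueContraction.
Variables (V : Type) (H : set (edge V)) (p q : rpath V) (S : nat -> Prop)
  (f g : nat -> nat) (e : nat).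
Hypotheses (HH : is_higraph H) (Pp : is_path H p) (Pq : is_path H q)
  (C : contraction p q S f g) (He : e < na q).

Let x := asrc q e.
Let y := atgt q e.
Let K := alab q e.
Let a0 := g e.
Let xp := asrc p a0.
Let yp := atgt p a0.
Let F1 := fiber p f x.
Let F2 := fiber p f y.
Let F' := fiber p (fun v => node_map x y (f v)) (node_shift y x).

Let Tp : is_tree p := let: And5 T _ _ _ _ := Pp in T.
Let Tq : is_tree q := let: And5 T _ _ _ _ := Pq in T.
Let nxy : x <> y := tree_arrow_no_loop Tq He.
Let Hxy : x < nn q /\ y < nn q := tree_arrow_ends Tq He.
Let Ha0 : a0 < na p /\ ~ S a0 := ctr_arrow C He.
Let Hxpyp : xp < nn p /\ yp < nn p := tree_arrow_ends Tp (proj1 Ha0).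
Let fa0 : [/\ f xp = x, f yp = y & alab p a0 = K].
Proof. by have [s1 s2 s3] := ctr_arrow_ends C He; split. Qed.

Lemma node_map_glued_iff z : z < nn q -> (node_map x y z = node_shift y x <-> z = x \/ z = y).
Proof.
move=> Hz; rewrite /node_map; case: (eqVneq z y) => [->|/eqP nzy].
  by split => // _; right.
by split => [E|[->|E]] //; left; apply: (node_shift_inj nzy nxy E).
Qed.

Lemma glued_fiberP u : F' u <-> u < nn p /\ (f u = x \/ f u = y).
Proof.
by rewrite /F' /fiber; split => -[Hu E]; split => //; apply/(node_map_glued_iff (ctr_node_lt C Hu)).
Qed.

Lemma src_fiber_glued u : F1 u -> F' u.
Proof. by move=> [Hu E]; apply/glued_fiberP; split => //; left. Qed.

Lemma tgt_fiber_glued u : F2 u -> F' u.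
Proof. by move=> [Hu E]; apply/glued_fiberP; split => //; right. Qed.

Lemma glued_fiber_arrow b : sub_arrow p F' b ->
  [/\ b < na p, f (asrc p b) = x \/ f (asrc p b) = y & f (atgt p b) = x \/ f (atgt p b) = y].
Proof. by move=> [Hb [/glued_fiberP [_ E1] /glued_fiberP [_ E2]]]. Qed.

Lemma glued_arrow_in_fiber : sub_arrow p F' a0.
Proof.
have [fx fy _] := fa0; have [r1 r2] := Hxpyp.
by split; [case: Ha0|split; apply/glued_fiberP; split => //; [left|right]].
Qed.

Lemma sub_arrow_fiber b w : b < na p -> f (asrc p b) = w -> f (atgt p b) = w ->
  sub_arrow p (fiber p f w) b.
Proof. by move=> Hb E1 E2; have [r1 r2] := tree_arrow_ends Tp Hb; do !split. Qed.

(* An arrow of the fibre of [y] ending at [yp] with label [K] would share its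
   target and label with the glued arrow. *)
Lemma glued_label_src_contrib : src_contrib p F2 yp K.
Proof.
have [_ _ Hi _ dt] := Pp; have [Ha nS] := Ha0; have [_ _ aK] := fa0.
have [_ Ls] := setI1_mem (Hi a0 Ha); rewrite aK in Ls.
split => // -[b [[Hb [[_ s1] [_ s2]]] E1 E2]].
have Sb : S b by apply: (same_fiber_contracted Tq C Hb); rewrite s1 s2.
apply: (dt b a0 Hb Ha) => //; first by move=> Eb; apply: nS; rewrite -Eb.
by rewrite E2 aK.
Qed.

Lemma glued_label_tgt_contrib : tgt_contrib p F1 xp K.
Proof.
have [_ _ Hi ds _] := Pp; have [Ha nS] := Ha0; have [_ _ aK] := fa0.
have [Lt _] := setI1_mem (Hi a0 Ha); rewrite aK in Lt.
split => // -[b [[Hb [[_ s1] [_ s2]]] E1 E2]].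
have Sb : S b by apply: (same_fiber_contracted Tq C Hb); rewrite s1 s2.
apply: (ds b a0 Hb Ha) => //; first by move=> Eb; apply: nS; rewrite -Eb.
by rewrite E2 aK.
Qed.

Lemma glued_fiber_src : subpath_src p F' = subpath_src p F1 `|` (subpath_src p F2 `\ K).
Proof.
have [fx fy aK] := fa0; have [r1 r2] := Hxpyp.
apply/seteqP; split => z /=.
- move=> [v [Fv Hz Hn]]; have Cv : src_contrib p F' v z by [].
  have [Hv [Ex|Ey]] := (glued_fiberP v).1 Fv.
    left; exists v; split => //.
    by have [] := src_contrib_anti src_fiber_glued Cv.
  have C2 := src_contrib_anti tgt_fiber_glued Cv.
  right; split; first by exists v; split => //; case: C2.
  move=> /= zK; rewrite zK in Cv C2.
  case: (EM (v = yp)) => [Evy|nvy].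
    by case: Cv => _; apply; exists a0; split => //; try exact: glued_arrow_in_fiber; rewrite ?Evy.
  apply: (ctr_src_disj C Hv r2 nvy); first by rewrite Ey fy.
    by rewrite Ey; exact: C2.
  by rewrite Ey; exact: glued_label_src_contrib.
- move=> [[v [[Hv Ev] Hz Hn]]|[[v [[Hv Ev] Hz Hn]] zK]].
    exists v; split => //; first exact: src_fiber_glued.
    move=> [b [Sb Eb Lb]]; have [Hb [s|s] t] := glued_fiber_arrow Sb.
      by apply: Hn; exists b; split => //; apply: sub_arrow_fiber => //; rewrite Eb.
    by apply: (no_arrow_against_fibers Tp Tq C Hb He s); rewrite Eb.
  exists v; split => //; first exact: tgt_fiber_glued.
  move=> [b [Sb Eb Lb]]; have [Hb [s|s] t] := glued_fiber_arrow Sb.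
    by apply: zK; rewrite /= -Lb (arrow_between_fibers Tp Tq C Hb He s) ?Eb.
  by apply: Hn; exists b; split => //; apply: sub_arrow_fiber => //; rewrite Eb.
Qed.

Lemma glued_fiber_tgt : subpath_tgt p F' = (subpath_tgt p F1 `\ K) `|` subpath_tgt p F2.
Proof.
have [fx fy aK] := fa0; have [r1 r2] := Hxpyp.
apply/seteqP; split => z /=.
- move=> [v [Fv Hz Hn]]; have Cv : tgt_contrib p F' v z by [].
  have [Hv [Ex|Ey]] := (glued_fiberP v).1 Fv; last first.
    right; exists v; split => //.
    by have [] := tgt_contrib_anti tgt_fiber_glued Cv.
  have C1 := tgt_contrib_anti src_fiber_glued Cv.
  left; split; first by exists v; split => //; case: C1.
  move=> /= zK; rewrite zK in Cv C1.
  case: (EM (v = xp)) => [Evx|nvx].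
    by case: Cv => _; apply; exists a0; split => //; try exact: glued_arrow_in_fiber; rewrite ?Evx.
  apply: (ctr_tgt_disj C Hv r1 nvx); first by rewrite Ex fx.
    by rewrite Ex; exact: C1.
  by rewrite Ex; exact: glued_label_tgt_contrib.
- move=> [[[v [[Hv Ev] Hz Hn]] zK]|[v [[Hv Ev] Hz Hn]]].
    exists v; split => //; first exact: src_fiber_glued.
    move=> [b [Sb Eb Lb]]; have [Hb s [t|t]] := glued_fiber_arrow Sb.
      by apply: Hn; exists b; split => //; apply: sub_arrow_fiber => //; rewrite Eb.
    by apply: zK; rewrite /= -Lb (arrow_between_fibers Tp Tq C Hb He _ t) ?Eb.
  exists v; split => //; first exact: tgt_fiber_glued.
  move=> [b [Sb Eb Lb]]; have [Hb s [t|t]] := glued_fiber_arrow Sb.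
    by apply: (no_arrow_against_fibers Tp Tq C Hb He _ t); rewrite Eb.
  by apply: Hn; exists b; split => //; apply: sub_arrow_fiber => //; rewrite Eb.
Qed.

(* Transitivity of [H] lets the sources of [x] and [y] meet only in [K]; within
   the fibre of [y], [K] is contributed only by [yp], where the glued arrow
   cancels it. *)
Lemma glued_src_disj u v z : F1 u -> F2 v -> src_contrib p F' u z -> src_contrib p F' v z -> False.
Proof.
move=> [Hu Eu] [Hv Ev] Cu Cv.
have [_ fy aK] := fa0; have [_ r2] := Hxpyp; have [Hx Hy] := Hxy.
have [_ d1 _ _] := glue_transitive HH Pq He.
have C1 := src_contrib_anti src_fiber_glued Cu; have C2 := src_contrib_anti tgt_fiber_glued Cv.
have zx : esrc (nlab q x) z by rewrite (ctr_nlab C Hx); exists u; case: C1.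
have zy : esrc (nlab q y) z by rewrite (ctr_nlab C Hy); exists v; case: C2.
case: (EM (z = K)) => [zK|nzK]; last by apply: (setI0_mem d1 zx).
rewrite zK in Cv C2.
case: (EM (v = yp)) => [Evy|nvy].
  by case: Cv => _; apply; exists a0; split => //; try exact: glued_arrow_in_fiber; rewrite ?Evy.
apply: (ctr_src_disj C Hv r2 nvy); first by rewrite Ev fy.
  by rewrite Ev; exact: C2.
by rewrite Ev; exact: glued_label_src_contrib.
Qed.

Lemma glued_tgt_disj u v z : F1 u -> F2 v -> tgt_contrib p F' u z -> tgt_contrib p F' v z -> False.
Proof.
move=> [Hu Eu] [Hv Ev] Cu Cv.
have [fx _ aK] := fa0; have [r1 _] := Hxpyp; have [Hx Hy] := Hxy.
have [_ _ d2 _] := glue_transitive HH Pq He.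
have C1 := tgt_contrib_anti src_fiber_glued Cu; have C2 := tgt_contrib_anti tgt_fiber_glued Cv.
have zx : etgt (nlab q x) z by rewrite (ctr_nlab C Hx); exists u; case: C1.
have zy : etgt (nlab q y) z by rewrite (ctr_nlab C Hy); exists v; case: C2.
case: (EM (z = K)) => [zK|nzK]; last by apply: (setI0_mem d2 _ zy).
rewrite zK in Cu C1.
case: (EM (u = xp)) => [Eux|nux].
  by case: Cu => _; apply; exists a0; split => //; try exact: glued_arrow_in_fiber; rewrite ?Eux.
apply: (ctr_tgt_disj C Hu r1 nux); first by rewrite Eu fx.
  by rewrite Eu; exact: C1.
by rewrite Eu; exact: glued_label_tgt_contrib.
Qed.

Let f' v := node_map x y (f v).
Let S' a := S a \/ a = a0.

Lemma glue_fiber_conn u v : u < nn p -> v < nn p ->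
  (f' u = f' v <-> clos_refl_trans nat (uadj_in p S') u v).
Proof.
have [fx fy _] := fa0; have [r1 r2] := Hxpyp.
have to_S' u' v' : f u' = f v' -> u' < nn p -> v' < nn p ->
    clos_refl_trans nat (uadj_in p S') u' v'.
  move=> E Hu' Hv'; move/(ctr_fiber_conn C Hu' Hv'): E.
  by apply: crt_mono => u1 v1 [a [Ha Sa o]]; exists a; split => //; left.
have glued : clos_refl_trans nat (uadj_in p S') xp yp.
  by apply: rt_step; exists a0; split => //; [case: Ha0|right|left].
move=> Hu Hv; split => [E|].
  case: (EM (f u = f v)) => [Euv|nuv]; first exact: to_S'.
  have [//|[[Ex|Ey] [Ex'|Ey']]] := node_map_eq E nxy.
  - by exfalso; apply: nuv; rewrite Ex Ex'.
  - apply: rt_trans (to_S' _ _ _ Hu r1) (rt_trans _ _ _ _ _ glued (to_S' _ _ _ r2 Hv)).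
      by rewrite Ex fx.
    by rewrite Ey' fy.
  - apply: rt_trans (to_S' _ _ _ Hu r2) (rt_trans _ _ _ _ _ (crt_uadj_in_sym glued)
      (to_S' _ _ _ r1 Hv)).
      by rewrite Ey fy.
    by rewrite Ex' fx.
  - by exfalso; apply: nuv; rewrite Ey Ey'.
elim=> [u1 v1 [a [Ha [Sa|Ea] o]]|u1|u1 v1 w1 _ IH1 _ IH2] //.
- by have := contracted_arrow_same_fiber Tp C Ha Sa; case: o => [[<- <-]|[<- <-]]; rewrite /f' => ->.
- rewrite Ea in o; have E1 := (node_map_glued_iff (ctr_node_lt C r1)).2 (or_introl fx).
  have E2 := (node_map_glued_iff (ctr_node_lt C r2)).2 (or_intror fy).
  by case: o => [[<- <-]|[<- <-]]; rewrite /f' E1 E2.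
- by rewrite IH1.
Qed.

Lemma glue_nlab_fiber w : w < nn (glue q e) ->
  nlab (glue q e) w = (subpath_src p (fiber p f' w), subpath_tgt p (fiber p f' w)).
Proof.
move=> /= Hw; case: eqP => [Ew|nw].
  have [Hx Hy] := Hxy.
  rewrite Ew glue_lab_eq // (ctr_nlab C Hx) (ctr_nlab C Hy) /=.
  by have := glued_fiber_src; have := glued_fiber_tgt; rewrite /F' /F1 /F2 => -> ->.
have Hu := node_unshift_lt y Hw.
rewrite (ctr_nlab C Hu) (@fiber_ext V p f f' (node_unshift y w) w) // => u Hu'.
rewrite /f'; split => [->|E]; first exact: node_map_unshift.
have fu := ctr_node_lt C Hu'.
case: (EM (f u = x \/ f u = y)) => [o|no].
  by exfalso; apply: nw; rewrite -E; apply/(node_map_glued_iff fu).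
rewrite -E /f' /node_map; case: eqP => [Ey|nfy]; first by exfalso; apply: no; right.
by rewrite node_shiftK.
Qed.

Lemma fiber_node_map_sub u w : fiber p f (f u) w -> fiber p f' (f' u) w.
Proof. by move=> [Hw Ew]; split => //; rewrite /f' Ew. Qed.

Lemma glue_src_disj u v z : u < nn p -> v < nn p -> u <> v -> f' u = f' v ->
  src_contrib p (fiber p f' (f' u)) u z -> src_contrib p (fiber p f' (f' u)) v z -> False.
Proof.
move=> Hu Hv nuv E Cu Cv.
case: (EM (f u = f v)) => [Euv|nfuv].
  apply: (ctr_src_disj C Hu Hv nuv Euv);
    [apply: (src_contrib_anti _ Cu)|apply: (src_contrib_anti _ Cv)]; exact: fiber_node_map_sub.
have [//|[ou ov]] := node_map_eq E nxy.
have EF : f' u = node_shift y x by apply/(node_map_glued_iff (ctr_node_lt C Hu)).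
rewrite EF in Cu Cv.
case: ou => Eu; case: ov => Ev; try by exfalso; apply: nfuv; rewrite Eu Ev.
  exact: (glued_src_disj (conj Hu Eu) (conj Hv Ev) Cu Cv).
exact: (glued_src_disj (conj Hv Ev) (conj Hu Eu) Cv Cu).
Qed.

Lemma glue_tgt_disj u v z : u < nn p -> v < nn p -> u <> v -> f' u = f' v ->
  tgt_contrib p (fiber p f' (f' u)) u z -> tgt_contrib p (fiber p f' (f' u)) v z -> False.
Proof.
move=> Hu Hv nuv E Cu Cv.
case: (EM (f u = f v)) => [Euv|nfuv].
  apply: (ctr_tgt_disj C Hu Hv nuv Euv);
    [apply: (tgt_contrib_anti _ Cu)|apply: (tgt_contrib_anti _ Cv)]; exact: fiber_node_map_sub.
have [//|[ou ov]] := node_map_eq E nxy.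
have EF : f' u = node_shift y x by apply/(node_map_glued_iff (ctr_node_lt C Hu)).
rewrite EF in Cu Cv.
case: ou => Eu; case: ov => Ev; try by exfalso; apply: nfuv; rewrite Eu Ev.
  exact: (glued_tgt_disj (conj Hu Eu) (conj Hv Ev) Cu Cv).
exact: (glued_tgt_disj (conj Hv Ev) (conj Hu Eu) Cv Cu).
Qed.

Lemma contraction_glue :
  contraction p (glue q e) S' f' (fun j => g (arr_unshift e j)).
Proof.
have [Hx Hy] := Hxy; have [Ha _] := Ha0.
split.
- by move=> a [/(ctr_contracted C)|->].
- by move=> v Hv /=; apply: node_map_lt => //; apply: (ctr_node_lt C).
- move=> w /= Hw; have [v Hv Ev] := ctr_node_surj C (node_unshift_lt y Hw).
  by exists v => //; rewrite /f' Ev node_map_unshift.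
- exact: glue_fiber_conn.
- move=> j /= Hj; have Hb := arr_unshift_lt Hj He; have [G1 G2] := ctr_arrow C Hb.
  split => // -[//|E]; apply: (@arr_unshift_neq e j); exact: (ctr_arrow_inj C Hb He E).
- move=> i j /= Hi Hj E; apply: (@arr_unshift_inj e).
  exact: (ctr_arrow_inj C (arr_unshift_lt Hi He) (arr_unshift_lt Hj He) E).
- move=> a Ha' nS; have [b Hb Eb] := ctr_arrow_surj C Ha' (fun Sa => nS (or_introl Sa)).
  have nbe : b <> e by move=> Ebe; apply: nS; right; rewrite -Eb Ebe.
  by exists (pi e b); [exact: pi_lt|rewrite piK].
- move=> j /= Hj; have [-> -> ->] := ctr_arrow_ends C (arr_unshift_lt Hj He).
  by [].
- exact: glue_nlab_fiber.
- exact: glue_src_disj.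
- exact: glue_tgt_disj.
Qed.

End GlueContraction.

(** * The bijection *)

Lemma contraction_glue_tuple V (H : set (edge V)) (p : rpath V) ds : is_higraph H -> is_path H p ->
  forall (q : rpath V) S f g, is_path H q -> contraction p q S f g ->
  uniq ds -> all (fun a => a < na q) ds ->
  exists f' g', contraction p (glue_seq q (tup2gs ds)) (fun a => S a \/ a \in map g ds) f' g'.
Proof.
move=> HH Pp; elim/tup2gs_ind: ds => [|d ds IH] q S f g Pq C.
  by move=> _ _; exists f, g; apply: (contraction_S_ext _ C) => a; split=> [|[]] //; left.
move=> /andP [nd u] /andP [Hd Ha].
have [f' [g' C']] := IH _ _ _ _ (is_path_glue HH Pq Hd) (contraction_glue HH Pp Pq C Hd)
  (uniq_map_pi nd u) (all_map_pi nd Hd Ha).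
exists f', g'; rewrite tup2gs_cons.
apply: (contraction_S_ext _ C') => a.
have -> : map (fun j => g (arr_unshift d j)) (map (pi d) ds) = map g ds.
  by rewrite -map_comp; apply/eq_in_map => b Hb /=; rewrite piK // => E; move: nd; rewrite -E Hb.
rewrite inE; split => [[[Sa|->]|Ia]|[Sa|/orP [/eqP Ea|Ia]]].
- by left.
- by right; rewrite eqxx.
- by right; rewrite Ia orbT.
- by left; left.
- by left; right.
- by right.
Qed.

Lemma bij_on_card n m (h : nat -> nat) : (forall i, i < n -> h i < m) ->
  (forall i j, i < n -> j < n -> h i = h j -> i = j) ->
  (forall k, k < m -> exists2 i, i < n & h i = k) -> n = m.
Proof.
move=> h1 h2 h3; apply/eqP; rewrite eqn_leq; apply/andP; split.
  have U : uniq (map h (iota 0 n)).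
    by rewrite map_inj_in_uniq ?iota_uniq // => i j; rewrite !mem_iota !add0n /=; exact: h2.
  have := @uniq_leq_size _ _ (iota 0 m) U; rewrite size_map !size_iota; apply => k /mapP [i].
  by rewrite !mem_iota add0n => Hi ->; rewrite h1.
have := @uniq_leq_size _ (iota 0 m) (map h (iota 0 n)) (iota_uniq _ _).
rewrite size_map !size_iota; apply => k; rewrite mem_iota add0n /= => /h3 [i Hi <-].
by apply: map_f; rewrite mem_iota add0n.
Qed.

Lemma is_path_iso V (H : set (edge V)) (p p' : rpath V) phi psi :
  is_path H p -> path_iso p p' phi psi -> is_path H p'.
Proof.
move=> [[n0 En Hr conn] Hl Hi ds dt] [[n1 n2 n3] [[a1 a2 a3] [l1 l2]]].
have Enn := bij_on_card n1 n2 n3; have Ena := bij_on_card a1 a2 a3.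
have distinct_at (end_ : rpath V -> nat -> nat) :
    (forall a, a < na p -> end_ p' (psi a) = phi (end_ p a)) ->
    (forall a, a < na p -> end_ p a < nn p) ->
    (forall a b, a < na p -> b < na p -> a <> b -> end_ p a = end_ p b -> alab p a <> alab p b) ->
    forall b b', b < na p' -> b' < na p' -> b <> b' -> end_ p' b = end_ p' b' ->
      alab p' b <> alab p' b'.
  move=> Eend Hend D b b' /a3 [a Ha <-] /a3 [a' Ha' <-] nbb' E.
  have [_ _ ->] := l2 a Ha; have [_ _ ->] := l2 a' Ha'.
  apply: D => //; first by move=> Eaa; apply: nbb'; rewrite Eaa.
  by apply: n2; rewrite ?Hend // -!Eend.
split; [split|..].
- by rewrite -Enn.
- by rewrite -Enn -Ena.
- move=> b /a3 [a Ha <-]; have [-> -> _] := l2 a Ha.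
  by have [r1 r2] := Hr a Ha; split; apply: n1.
- move=> w w' /n3 [v Hv <-] /n3 [v' Hv' <-].
  elim: (conn v v' Hv Hv') => [u1 v1 [a [Ha o]]|u1|u1 v1 z1 _ IH1 _ IH2].
  + apply: rt_step; exists (psi a); split; first exact: a1.
    have [-> -> _] := l2 a Ha.
    by case: o => [[-> ->]|[-> ->]]; [left|right].
  + exact: rt_refl.
  + exact: rt_trans IH1 IH2.
- by move=> w /n3 [v Hv <-]; rewrite l1 //; apply: Hl.
- move=> b /a3 [a Ha <-]; have [-> -> ->] := l2 a Ha.
  by have [r1 r2] := Hr a Ha; rewrite !l1 //; apply: Hi.
- apply: distinct_at ds => [a /l2 []|a /Hr []] //.
- apply: distinct_at dt => [a /l2 []|a /Hr []] //.
Qed.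

(* Each gluing step on the contraction [q] of [p] glues an arrow of [p] outside
   the contracted set; collecting these arrows gives the tuple, and any other
   contraction of [p] along the same set glues them in the same way. *)
Lemma gluing_seq_tuple V (H : set (edge V)) (p : rpath V) : is_higraph H -> is_path H p ->
  forall es (q : rpath V) S f g, is_path H q -> contraction p q S f g -> valid_gs q es ->
  exists ds, [/\ uniq ds, (forall d, d \in ds -> d < na p /\ ~ S d), size ds = size es &
    forall (q' : rpath V) S' f' g' dq, is_path H q' -> contraction p q' S' f' g' ->
      (forall a, S a <-> S' a) -> uniq dq -> all (fun a => a < na q') dq -> map g' dq = ds ->
      gs_equiv q' (tup2gs dq) q es].
Proof.
move=> HH Pp; have [Tp _ _ _ _] := Pp.
elim=> [|e es IH] q S f g Pq C Hv.
  by exists [::]; split => // q' S' f' g' [|//] _ _ _ _ _ _; split.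
case: Hv => He Hv; have [Ge nSe] := ctr_arrow C He.
have [ds1 [u1 D1 Sz1 Eq1]] := IH _ _ _ _ (is_path_glue HH Pq He) (contraction_glue HH Pp Pq C He) Hv.
exists (g e :: ds1); split.
- by rewrite /= u1 andbT; apply/negP => /D1 [_]; apply; right.
- by move=> d; rewrite inE => /orP [/eqP ->|/D1 [Hd nS]] //; split => // Sd; apply: nS; left.
- by rewrite /= Sz1.
move=> q' S' f' g' [|d0 dq1] //= Pq' C' SE /andP [nd0 u'] /andP [Hd0 Ha'] [Ed0 Edq].
have SE' a : (S a \/ a = g e) <-> (S' a \/ a = g' d0).
  by rewrite Ed0; split => -[/SE|]; by [left|right].
have E' : gs_equiv (glue q' d0) (tup2gs (map (pi d0) dq1)) (glue q e) es.
  apply: (Eq1 _ _ _ _ _ (is_path_glue HH Pq' Hd0) (contraction_glue HH Pp Pq' C' Hd0) SE'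
    (uniq_map_pi nd0 u') (all_map_pi nd0 Hd0 Ha')).
  rewrite -map_comp -Edq; apply/eq_in_map => b Hb /=; rewrite piK //.
  by move=> Eb; move: nd0; rewrite -Eb Hb.
have [phi [psi [I Ipsi]]] := contraction_iso Tp C' C (fun a => iff_sym (SE a)).
case: E' => Es Ej; rewrite tup2gs_cons; split; first by rewrite /= Es.
move=> [|j] /= Hj; last exact: Ej.
exists phi, psi; split => //; apply: (ctr_arrow_inj C) => //.
  by have [_ [[a1 _ _] _]] := I; apply: a1.
by rewrite Ipsi.
Qed.

Lemma tup2gs_onto V (H : set (edge V)) (p p' : rpath V) es : is_higraph H -> is_path H p ->
  isomorphic p p' -> valid_gs p' es ->
  exists2 ds, break_tuple p (size es) ds & gs_equiv p (tup2gs ds) p' es.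
Proof.
move=> HH Pp [phi [psi I]] Hv.
have [g0 [C0 _]] := contraction_of_iso Pp I.
have [ds [u D Sz Eq]] := gluing_seq_tuple HH Pp (is_path_iso Pp I) C0 Hv.
have [g1 [C1 Hg1]] := contraction_refl Pp.
have Ha : all (fun a => a < na p) ds by apply/allP => d /D [].
exists ds; first by split.
apply: (Eq p _ _ _ ds Pp C1) => //.
by rewrite -[RHS]map_id; apply/eq_in_map => d /D [Hd _]; apply: Hg1.
Qed.

(* Both gluing sequences realise the contraction of [p] along the same set of
   arrows. *)
Lemma glue_seq_tup2gs_perm V (H : set (edge V)) (p : rpath V) ds ds' :
  is_higraph H -> is_path H p -> uniq ds -> all (fun a => a < na p) ds -> perm_eq ds ds' ->
  isomorphic (glue_seq p (tup2gs ds)) (glue_seq p (tup2gs ds')).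
Proof.
move=> HH Pp u Ha Pm; have [Tp _ _ _ _] := Pp.
have u' : uniq ds' by rewrite -(perm_uniq Pm).
have Ha' : all (fun a => a < na p) ds' by rewrite -(perm_all _ Pm).
have [g1 [C1 _]] := contraction_refl Pp.
have [f2 [g2 C2]] := contraction_glue_tuple HH Pp Pp C1 u Ha.
have [f3 [g3 C3]] := contraction_glue_tuple HH Pp Pp C1 u' Ha'.
have SE a : (False \/ a \in map g1 ds) <-> (False \/ a \in map g1 ds').
  by rewrite (perm_mem (perm_map g1 Pm)).
by have [phi [psi [I _]]] := contraction_iso Tp C2 C3 SE; exists phi, psi.
Qed.

Unset Implicit Arguments.

Theorem proposition4p17 (V : Type) (H : set (edge V)) (p : rpath V) (k : nat) :
  is_higraph H -> is_path H p -> 1 <= k ->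
  [/\ (forall ds, break_tuple p k ds ->
         valid_gs p (tup2gs ds) /\ size (tup2gs ds) = k),
      (forall ds ds', break_tuple p k ds -> break_tuple p k ds' ->
         gs_equiv p (tup2gs ds) p (tup2gs ds') -> ds = ds'),
      (forall p' es, isomorphic p p' -> valid_gs p' es -> size es = k ->
         exists2 ds, break_tuple p k ds & gs_equiv p (tup2gs ds) p' es) &
      (forall ds ds', break_tuple p k ds -> perm_eq ds ds' ->
         isomorphic (glue_seq p (tup2gs ds)) (glue_seq p (tup2gs ds')))].
Proof.
move=> HH Pp _; split.
- move=> ds [<- u Ha]; split; [exact: valid_gs_tup2gs|exact: size_tup2gs].
- move=> ds ds' [_ u Ha] [_ u' _] Eq.
  exact: tup2gs_inj u u' (gs_equiv_self_eq HH Pp (valid_gs_tup2gs u Ha) Eq).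
- by move=> p' es Iso Hv <-; exact: tup2gs_onto HH Pp Iso Hv.
- by move=> ds ds' [_ u Ha] Pm; exact: glue_seq_tup2gs_perm HH Pp u Ha Pm.
Qed.
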